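(* Let $\alpha>0$, $t_0>0$, $x_0,v_0\in\mathcal H$, and let $x$ be a solution of the Cauchy problem $$\tfrac{\alpha}{t}\dot x(t)+\operatorname{proj}_{C(x(t))+\ddot x(t)}(0)=0\ (t>t_0),\qquad x(t_0)=x_0,\ \dot x(t_0)=v_0 .$$ Let $z\in\mathcal H$, $\lambda\ge0$ with $\alpha\ge\lambda+1$, and $\xi^*=\lambda(\alpha-1-\lambda)$. For $i=1,\dots,m$ define $$\mathcal E_{i,\lambda,\xi^*}(t)=t^2\big(f_i(x(t))-f_i(z)\big)+\tfrac12\|\lambda(x(t)-z)+t\dot x(t)\|^2+\tfrac{\xi^*}{2}\|x(t)-z\|^2 .$$ Then for all $i$ and almost all $t\in[t_0,+\infty)$, $$\tfrac{d}{dt}\mathcal E_{i,\lambda,\xi^*}(t)\le 2t\big(f_i(x(t))-f_i(z)\big)-t\lambda\min_{j=1,\dots,m}\big(f_j(x(t))-f_j(z)\big)+t(\lambda+1-\alpha)\|\dot x(t)\|^2 .$$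
   Context: $\mathcal H$ is a real Hilbert space. $f_1,\dots,f_m:\mathcal H\to\mathbb R$ are convex and continuously differentiable. $C(x)=\operatorname{co}\{\nabla f_i(x):i=1,\dots,m\}$. For a closed convex $K$, $\operatorname{proj}_K(y)=\arg\min_{w\in K}\|w-y\|^2$. A solution of the Cauchy problem is a function $x:[t_0,+\infty)\to\mathcal H$ such that: $x\in C^1([t_0,+\infty))$; $\dot x$ is absolutely continuous on $[t_0,T]$ for every $T\ge t_0$; there is a Bochner measurable $\ddot x$ with $\dot x(t)=\dot x(t_0)+\int_{t_0}^t\ddot x(s)\,ds$ for all $t$, and $\frac{d}{dt}\dot x=\ddot x$ a.e.; the equation holds for almost all $t\ge t_0$; and the initial conditions hold. *)

From HB Require Import structures.
From mathcomp Require Import all_boot all_order all_algebra.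
From mathcomp Require Import all_classical all_reals all_analysis.
Set Implicit Arguments. Unset Strict Implicit. Unset Printing Implicit Defensive.
Import Order.TTheory GRing.Theory Num.Theory.
Import numFieldNormedType.Exports.
Local Open Scope classical_set_scope.
Local Open Scope ring_scope.

(* ip is an inner product on the normed space H inducing its norm; together
   with completeness of H (completeNormedModType) this makes H a real Hilbert space. *)
Definition inner_product {R : realType} {H : normedModType R} (ip : H -> H -> R) :=
  [/\ forall x y, ip x y = ip y x,
      forall (a : R) x y z, ip (a *: x + y) z = a * ip x z + ip y z
    & forall x, ip x x = `|x| ^+ 2].

Definition convex_fun {R : realType} {H : normedModType R} (f : H -> R) :=
  forall (x y : H) (s : R), 0 <= s <= 1 ->
    f (s *: x + (1 - s) *: y) <= s * f x + (1 - s) * f y.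

Definition is_gradient {R : realType} {H : normedModType R} (ip : H -> H -> R)
  (f : H -> R) (g : H -> H) :=
  forall x, differentiable f x /\ forall h, 'd f x h = ip (g x) h.

Definition C1_with_gradient {R : realType} {H : normedModType R} (ip : H -> H -> R)
  (f : H -> R) (g : H -> H) := is_gradient ip f g /\ continuous g.

Definition conv_hull {R : realType} {H : normedModType R} (n : nat) (v : 'I_n -> H)
  : set H :=
  [set w | exists mu : 'I_n -> R, (forall i, 0 <= mu i) /\ \sum_(i < n) mu i = 1
                               /\ w = \sum_(i < n) mu i *: v i].

Definition shift_set {R : realType} {H : normedModType R} (K : set H) (a : H) : set H :=
  [set k + a | k in K].

Definition is_proj {R : realType} {H : normedModType R} (K : set H) (y p : H) :=
  K p /\ forall w, K w -> `|p - y| ^+ 2 <= `|w - y| ^+ 2.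

Definition Cset {R : realType} {H : normedModType R} (m : nat) (gradf : 'I_m -> H -> H)
  (x : H) : set H := conv_hull (fun i => gradf i x).

Definition has_deriv_on {R : realType} {H : normedModType R} (I : set R)
  (u v : R -> H) :=
  forall t, I t ->
    (fun h : R => h^-1 *: (u (t + h) - u t)) @
       within (fun h : R => h != 0 /\ I (t + h)) (nbhs (0 : R)) --> v t.

Definition C1_on {R : realType} {H : normedModType R} (I : set R) (u v : R -> H) :=
  has_deriv_on I u v /\ {within I, continuous v}.

Definition abs_cont_on {R : realType} {H : normedModType R} (a b : R) (u : R -> H) :=
  forall eps : R, 0 < eps -> exists2 delta : R, 0 < delta &
    forall (n : nat) (c d : nat -> R),
      (forall k, (k < n)%N -> a <= c k <= d k /\ d k <= b) ->
      (forall k, (k.+1 < n)%N -> d k <= c k.+1) ->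
      \sum_(k < n) (d k - c k) < delta ->
      \sum_(k < n) `|u (d k) - u (c k)| < eps.

(* simple functions R -> H: finite lists of (measurable set, vector) *)
Definition simple_eval {R : realType} {H : normedModType R}
  (s : seq (set R * H)) (t : R) : H :=
  \sum_(p <- s) ((\1_(p.1) t : R) *: p.2).

Definition simple_integral {R : realType} {H : normedModType R}
  (s : seq (set R * H)) : H :=
  \sum_(p <- s) (fine (lebesgue_measure p.1) *: p.2).

Definition simple_on {R : realType} {H : normedModType R} (D : set R)
  (s : seq (set R * H)) :=
  forall p, p \in s -> [/\ measurable p.1, p.1 `<=` D & (lebesgue_measure p.1 < +oo)%E].

Definition bochner_measurable {R : realType} {H : normedModType R} (D : set R)
  (f : R -> H) :=
  exists s : nat -> seq (set R * H), (forall n, simple_on D (s n)) /\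
    {ae (@lebesgue_measure R), forall t, D t ->
        (fun n => simple_eval (s n) t) @ \oo --> f t}.

Definition bochner_integral_is {R : realType} {H : normedModType R} (D : set R)
  (f : R -> H) (v : H) :=
  bochner_measurable D f /\
  exists s : nat -> seq (set R * H), (forall n, simple_on D (s n)) /\
    (fun n => (\int[@lebesgue_measure R]_(t in D) (`|simple_eval (s n) t - f t|)%:E)%E)
      @ \oo --> 0%E /\
    (fun n => simple_integral (s n)) @ \oo --> v.

(* x is a solution of the Cauchy problem
     alpha/t xdot + proj_{C(x) + xddot}(0) = 0,  x(t0) = x0, xdot(t0) = v0,
   with xd its derivative and xdd the Bochner-measurable second derivative. *)
Definition is_solution {R : realType} {H : normedModType R} (m : nat)
  (gradf : 'I_m -> H -> H) (alpha t0 : R) (x0 v0 : H) (x xd xdd : R -> H) :=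
  [/\ C1_on `[t0, +oo[ x xd /\ (forall T, t0 <= T -> abs_cont_on t0 T xd),
      bochner_measurable `[t0, +oo[ xdd
      /\ (forall t, t0 <= t -> bochner_integral_is `[t0, t] xdd (xd t - xd t0)),
      ({ae (@lebesgue_measure R), forall t, t0 <= t -> is_derive t 1 xd (xdd t)}),
      ({ae (@lebesgue_measure R), forall t, t0 < t ->
         is_proj (shift_set (Cset gradf (x t)) (xdd t)) 0 (- ((alpha / t) *: xd t))})
    & x t0 = x0 /\ xd t0 = v0].

(* min_{j=1..m} F j  (m >= 1 is encoded by indexing over 'I_m.+1) *)
Definition minI {R : realType} (m : nat) (F : 'I_m.+1 -> R) : R :=
  \big[Num.min/F ord0]_(j < m.+1) F j.

Definition energy {R : realType} {H : normedModType R} (f : H -> R)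
  (x xd : R -> H) (z : H) (lambda xi : R) (t : R) : R :=
  t ^+ 2 * (f (x t) - f z) + 2^-1 * `|lambda *: (x t - z) + t *: xd t| ^+ 2
  + xi / 2 * `|x t - z| ^+ 2.

From HB Require Import structures.
From mathcomp Require Import all_boot all_order all_algebra.
From mathcomp Require Import all_classical all_reals all_analysis.
From mathcomp Require Import ring lra.
Import Order.TTheory GRing.Theory Num.Theory.
Import numFieldNormedType.Exports.
Local Open Scope classical_set_scope.
Local Open Scope ring_scope.

(* Differentiating the energy and substituting the equation in the form
   xdd = -(alpha/t) xd - c, where c in C(x) is the point realising the projection,
   the xi-term cancels the cross term <x - z, xd> and leaves
     2t (f_i(x) - f_i(z)) + t^2 <grad f_i(x) - c, xd> - t lambda <c, x - z>
       + t (lambda + 1 - alpha) |xd|^2.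
   The variational inequality of the projection of 0 onto the convex set C(x) + xdd,
   tested at grad f_i(x) + xdd, gives <grad f_i(x) - c, xd> <= 0.  Writing c as a
   convex combination of the gradients, the gradient inequality of each convex f_j
   gives <c, x - z> >= min_j (f_j(x) - f_j(z)). *)

Section ConvexHull.
Context {R : realType} {H : normedModType R}.
Local Open Scope convex_scope.

Lemma conv_hull_mem {n} (v : 'I_n -> H) i : conv_hull v (v i).
Proof.
exists (fun j => (j == i)%:R); split=> [j|]; first exact: ler0n.
rewrite (bigD1 i) // [in X in _ /\ X](bigD1 i) //= !eqxx scale1r.
by split; rewrite big1 ?addr0 // => j /negbTE ->; rewrite ?scale0r.
Qed.

Lemma convex_conv_hull {n} (v : 'I_n -> H) :
  convex_set (conv_hull v : set (convex_lmodType H)).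
Proof.
move=> x y l; rewrite !inE => -[mu [mu_ge0 [mu1 ->]]] [nu [nu_ge0 [nu1 ->]]].
exists (fun j => l%:num * mu j + (1 - l%:num) * nu j); split.
  by move=> j; rewrite addr_ge0 // mulr_ge0 // onem_ge0.
rewrite big_split /= -!mulr_sumr mu1 nu1 !mulr1 subrKC; split=> //.
rewrite -[LHS]/(l%:num *: _ + (1 - l%:num) *: _) !scaler_sumr -big_split /=.
by apply: eq_bigr => j _; rewrite !scalerA scalerDl.
Qed.

Lemma convex_shift_set {K : set H} a :
  convex_set (K : set (convex_lmodType H)) ->
  convex_set (shift_set K a : set (convex_lmodType H)).
Proof.
move=> K_convex x y l; rewrite !inE => -[k Kk <-] [k' Kk' <-].
exists ((k : convex_lmodType H) <| l |> k').
  by have := K_convex k k' l; rewrite !inE; apply.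
change (l%:num *: k + (1 - l%:num) *: k' + a =
        l%:num *: (k + a) + (1 - l%:num) *: (k' + a)).
by rewrite !scalerDr addrACA -scalerDl subrKC scale1r.
Qed.

End ConvexHull.

Lemma is_derive_diff_comp {R : realType} {V W : normedModType R}
    {phi : V -> W} {u : R -> V} {t : R} {du : V} :
  differentiable phi (u t) -> is_derive t 1 u du ->
  is_derive t 1 (fun s => phi (u s)) ('d phi (u t) du).
Proof.
move=> phi_diff [u_der <-].
have u_diff : differentiable u t by exact/derivable1_diffP.
have comp_diff := differentiable_comp u_diff phi_diff.
have -> : (fun s => phi (u s)) = phi \o u by [].
split; first exact/derivable1_diffP.
by rewrite deriveE // diff_comp //= (deriveE _ u_diff).
Qed.

Lemma has_deriv_on_is_derive {R : realType} {V : normedModType R}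
    {I : set R} {u v : R -> V} {t : R} :
  has_deriv_on I u v -> nbhs t I -> is_derive t 1 u (v t).
Proof.
move=> u_der It; have /u_der u_cvg := nbhs_singleton It.
have u_cvg' : (fun h : R => h^-1 *: (u (h *: 1 + t) - u t)) @ 0^' --> v t.
  under eq_fun do rewrite [_ *: 1]mulr1 [_ + t]addrC.
  apply: cvg_trans u_cvg; apply: cvg_app => A /= A_near.
  move/nbhs0P: It => It; rewrite /dnbhs /within.
  by apply: (filterS2 _ _ It A_near) => h Ith Ah h0; apply: Ah.
by split; [apply/cvg_ex; exists (v t)|exact: cvg_lim].
Qed.

Section InnerProduct.
Context {R : realType} {H : normedModType R} {ip : H -> H -> R}.
Hypothesis ipP : inner_product ip.

Lemma ipC x y : ip x y = ip y x.
Proof. by case: ipP. Qed.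

Lemma ipxx x : ip x x = `|x| ^+ 2.
Proof. by case: ipP. Qed.

Lemma ipZDl a x y z : ip (a *: x + y) z = a * ip x z + ip y z.
Proof. by case: ipP. Qed.

Lemma ipDl x y z : ip (x + y) z = ip x z + ip y z.
Proof. by rewrite -[x]scale1r ipZDl mul1r scale1r. Qed.

Lemma ip0l z : ip 0 z = 0.
Proof. by have := ipDl 0 0 z; rewrite addr0 => h; lra. Qed.

Lemma ipZl a x z : ip (a *: x) z = a * ip x z.
Proof. by rewrite -[a *: x]addr0 ipZDl ip0l addr0. Qed.

Lemma ipNl x z : ip (- x) z = - ip x z.
Proof. by rewrite -scaleN1r ipZl mulN1r. Qed.

Lemma ipBl x y z : ip (x - y) z = ip x z - ip y z.
Proof. by rewrite ipDl ipNl. Qed.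

Lemma ipDr x y z : ip z (x + y) = ip z x + ip z y.
Proof. by rewrite ipC ipDl !(ipC z). Qed.

Lemma ipZr a x z : ip z (a *: x) = a * ip z x.
Proof. by rewrite ipC ipZl ipC. Qed.

Lemma ipNr x z : ip z (- x) = - ip z x.
Proof. by rewrite ipC ipNl ipC. Qed.

Lemma ip_suml n (mu : 'I_n -> R) (v : 'I_n -> H) w :
  ip (\sum_(j < n) mu j *: v j) w = \sum_(j < n) mu j * ip (v j) w.
Proof.
elim/big_rec2: _ => [|j u s _ <-]; first exact: ip0l.
by rewrite ipDl ipZl.
Qed.

Lemma sqnormD x y : `|x + y| ^+ 2 = `|x| ^+ 2 + 2 * ip x y + `|y| ^+ 2.
Proof. by rewrite -!ipxx ipDl !ipDr (ipC y x); ring. Qed.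

Lemma ip_polarization x y :
  ip x y = 2^-1 * (`|x + y| ^+ 2 - `|x| ^+ 2 - `|y| ^+ 2).
Proof. by rewrite sqnormD; field. Qed.

Lemma continuous_ip : continuous (fun p : H * H => ip p.1 p.2).
Proof.
have -> : (fun p : H * H => ip p.1 p.2) =
    (fun p => 2^-1 * (`|p.1 + p.2| ^+ 2 - `|p.1| ^+ 2 - `|p.2| ^+ 2)).
  by apply/funext => p; rewrite ip_polarization.
move=> p; apply: cvgMl_tmp.
have cvg_sqnorm (u : H * H -> H) : u @ p --> u p ->
    (fun q => `|u q| ^+ 2) @ p --> `|u p| ^+ 2.
  move=> cu; rewrite expr2; under eq_fun do rewrite expr2.
  by apply: cvgM; exact: cvg_norm.
by apply: cvgB; [apply: cvgB|]; apply: cvg_sqnorm;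
  [apply: cvgD| |]; [exact: cvg_fst|exact: cvg_snd|exact: cvg_fst|exact: cvg_snd].
Qed.

Lemma ip_is_bilinear : bilinear_for (GRing.Scale.Law.clone _ _ *:%R _)
  (GRing.Scale.Law.clone _ _ *:%R _) ip.
Proof. by split => [u|u] a x y /=; rewrite ?ipZDl // ipC ipZDl !(ipC u). Qed.

Definition ip_bilinear : {bilinear H -> H -> R} :=
  HB.pack ip (bilinear_isBilinear.Build _ _ _ _ _ _ ip ip_is_bilinear).

Lemma is_derive_ip {a b : R -> H} {t : R} {da db : H} :
  is_derive t 1 a da -> is_derive t 1 b db ->
  is_derive t 1 (fun s => ip (a s) (b s)) (ip da (b t) + ip (a t) db).
Proof.
move=> [a_der <-] [b_der <-].
have a_diff : differentiable a t by exact/derivable1_diffP.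
have b_diff : differentiable b t by exact/derivable1_diffP.
have ab_diff := differentiable_pair a_diff b_diff.
have ip_diff : differentiable (fun q : H * H => ip_bilinear q.1 q.2) (a t, b t).
  by apply: differentiable_bilin; exact: continuous_ip.
have -> : (fun s => ip (a s) (b s)) =
  (fun q : H * H => ip_bilinear q.1 q.2) \o (fun s => (a s, b s)) by [].
split; first exact/derivable1_diffP/differentiable_comp.
rewrite deriveE; last exact: differentiable_comp.
rewrite diff_comp // diff_bilin; last exact: continuous_ip.
by rewrite /= diff_pair //= -!deriveE // addrC.
Qed.


Lemma is_proj_variational {K : set H} {y p : H} :
  convex_set (K : set (convex_lmodType H)) -> is_proj K y p ->
  forall w, K w -> 0 <= ip (p - y) (w - p).
Proof.
move=> K_convex [Kp p_min] w Kw; rewrite leNgt; apply/negP => ip_lt0.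
set e := p - y in ip_lt0 p_min *; set d := w - p in ip_lt0 *.
set al := - ip e d; have al_gt0 : 0 < al by rewrite oppr_gt0.
set N := `|d| ^+ 2; have N_ge0 : 0 <= N by exact: exprn_ge0.
have Nal_gt0 : 0 < N + al by lra.
set s := al / (N + al).
have s_gt0 : 0 < s by exact: divr_gt0.
have s_le1 : s <= 1 by rewrite ler_pdivrMr // mul1r; lra.
have sNal : s * (N + al) = al by rewrite mulfVK // gt_eqF.
(* This [s] makes [2 s <e, d> + s^2 N = - s al (1 + s)] negative: [p + s d] is closer to [y]. *)
have Ks : K (p + s *: d).
  have := K_convex w p (Itv01 (ltW s_gt0) s_le1); rewrite !inE => /(_ Kw Kp).
  suff -> : p + s *: d = s *: w + (1 - s) *: p by [].
  by rewrite /d scalerBr scalerBl scale1r addrCA.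
have := p_min _ Ks; rewrite addrAC -/e (sqnormD e) ipZr normrZ exprMn.
rewrite (real_normK (num_real s)) -/N.
have -> : ip e d = - al by rewrite opprK.
nra.
Qed.

Lemma convex_gradient_le {f : H -> R} {g : H -> H} x z :
  convex_fun f -> is_gradient ip f g -> ip (g x) (z - x) <= f z - f x.
Proof.
move=> f_convex /(_ x) [f_diff <-]; rewrite -deriveE //.
have f_der : derivable f x (z - x) by exact: diff_derivable.
set q := fun h : R => h^-1 *: ((f \o shift x) (h *: (z - x)) - f x).
have q_cvg : q @ 0^'+ --> 'D_(z - x) f x.
  by apply: cvg_trans f_der; apply: cvg_app; apply: within_subset => h /gt_eqF ->.
apply: (cvgr_to_le q_cvg); near=> h.
have h_gt0 : 0 < h by near: h; exact: nbhs_right_gt.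
have h_lt1 : h < 1 by near: h; exact: nbhs_right_lt.
have := f_convex z x h; rewrite (ltW h_gt0) (ltW h_lt1) => /(_ isT).
have -> : h *: z + (1 - h) *: x = h *: (z - x) + x.
  by rewrite scalerBr scalerBl scale1r addrA [RHS]addrAC.
by rewrite /q /= ler_pdivrMl // => ?; lra.
Unshelve. all: by end_near. Qed.

Lemma minI_le_ip_Cset {m} {f : 'I_m.+1 -> H -> R} {gradf : 'I_m.+1 -> H -> H} y z c :
  (forall j, convex_fun (f j)) -> (forall j, is_gradient ip (f j) (gradf j)) ->
  Cset gradf y c -> minI (fun j => f j y - f j z) <= ip c (y - z).
Proof.
move=> f_convex f_grad [mu [mu_ge0 [mu1 ->]]].
rewrite ip_suml -[minI _]mul1r -mu1 mulr_suml; apply: ler_sum => j _.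
apply: ler_wpM2l; first exact: mu_ge0.
apply: le_trans (bigmin_le _ j _) _.
by have := convex_gradient_le y z (f_convex j) (f_grad j); rewrite -opprB ipNr; lra.
Qed.

Lemma is_derive_energy {f : H -> R} {x xd : R -> H} {t : R} {a : H} z lambda xi :
  differentiable f (x t) -> is_derive t 1 x (xd t) -> is_derive t 1 xd a ->
  is_derive t 1 (energy f x xd z lambda xi)
    (2 * t * (f (x t) - f z) + t ^+ 2 * 'd f (x t) (xd t)
     + ip (lambda *: (x t - z) + t *: xd t) ((lambda + 1) *: xd t + t *: a)
     + xi * ip (x t - z) (xd t)).
Proof.
move=> f_diff x_der xd_der.
have v_der : is_derive t 1 (fun s => x s - z) (xd t).
  by apply: is_derive_eq (is_deriveB x_der (is_derive_cst z t 1)) _; rewrite subr0.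
have sq_der : is_derive t 1 (fun s : R => s ^+ 2) (2 * t).
  apply: is_derive_eq (is_deriveM (is_derive_id t 1) (is_derive_id t 1)) _.
  by rewrite -[t%:A]/(t * 1) mulr1; lra.
have energyE : energy f x xd z lambda xi = fun s =>
    s ^+ 2 * (f (x s) - f z)
    + 2^-1 * (lambda ^+ 2 * ip (x s - z) (x s - z)
              + 2 * lambda * (s * ip (x s - z) (xd s)) + s ^+ 2 * ip (xd s) (xd s))
    + xi / 2 * ip (x s - z) (x s - z).
  apply/funext => s; rewrite /energy; move: (x s - z) (xd s) => v u.
  by rewrite -!ipxx !ipDl !ipDr !ipZl !ipZr (ipC u v); ring.
have vv_der := is_derive_ip v_der v_der.
have vu_der := is_derive_ip v_der xd_der.
have uu_der := is_derive_ip xd_der xd_der.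
have fx_der := is_derive_diff_comp f_diff x_der.
have E_der := is_deriveD
  (is_deriveD (is_deriveM sq_der (is_deriveB fx_der (is_derive_cst (f z) t 1)))
     (is_deriveZ 2^-1 (is_deriveD (is_deriveD (is_deriveZ (lambda ^+ 2) vv_der)
        (is_deriveZ (2 * lambda) (is_deriveM (is_derive_id t 1) vu_der)))
        (is_deriveM sq_der uu_der))))
  (is_deriveZ (xi / 2) vv_der).
rewrite energyE; apply: is_derive_eq E_der _.
have scaleRE (c d : R) : c *: d = c * d by [].
have fxE : ((fun s => f (x s)) - cst (f z)) t = f (x t) - f z by [].
rewrite !scaleRE fxE; move: (x t - z) (xd t) ('d f (x t) (xd t)) => v u df.
by rewrite !ipDl !ipDr !ipZl !ipZr (ipC u v) (ipC a u); field.
Qed.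

Lemma ip_damped_rate (v u c : H) (lambda alpha t : R) : t != 0 ->
  ip (lambda *: v + t *: u) ((lambda + 1) *: u + t *: (- ((alpha / t) *: u) - c))
  = lambda * (lambda + 1 - alpha) * ip v u + t * (lambda + 1 - alpha) * `|u| ^+ 2
    - t * lambda * ip c v - t ^+ 2 * ip c u.
Proof.
move=> t_neq0; rewrite -ipxx !(ipDl, ipDr, ipZl, ipZr, ipNl, ipNr).
by rewrite (ipC v c) (ipC u c); field.
Qed.

End InnerProduct.

Lemma ae_neq {R : realType} (a : R) : {ae @lebesgue_measure R, forall t, t != a}.
Proof.
exists [set a]; split; [exact: measurable_set1|exact: lebesgue_measure_set1|].
by move=> t /= /negP; rewrite negbK => /eqP.
Qed.

Theorem lemma4p11 (R : realType) (H : completeNormedModType R)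
  (ip : H -> H -> R) (m : nat) (f : 'I_m.+1 -> H -> R) (gradf : 'I_m.+1 -> H -> H)
  (alpha t0 : R) (x0 v0 : H) (x xd xdd : R -> H) (z : H) (lambda : R) :
  inner_product ip ->
  (forall i, convex_fun (f i)) ->
  (forall i, C1_with_gradient ip (f i) (gradf i)) ->
  0 < alpha -> 0 < t0 ->
  is_solution gradf alpha t0 x0 v0 x xd xdd ->
  0 <= lambda -> lambda + 1 <= alpha ->
  let xi := lambda * (alpha - 1 - lambda) in
  forall i : 'I_m.+1,
  {ae (@lebesgue_measure R), forall t, t0 <= t ->
    exists2 dE : R, is_derive t 1 (energy (f i) x xd z lambda xi) dE &
      dE <= 2 * t * (f i (x t) - f i z)
            - t * lambda * minI (fun j => f j (x t) - f j z)
            + t * (lambda + 1 - alpha) * `|xd t| ^+ 2}.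
Proof.
move=> ipP f_convex f_C1 alpha_gt0 t0_gt0 [[[x_der _] _] _ xd_der x_proj _].
move=> lambda_ge0 lambda_le xi i.
apply: (@filterS3 _ _ (ae_filter_ringOfSetsType _) _ _ _ _ _
  (ae_neq t0) xd_der x_proj) => t t_neq xd_dert x_projt t0_le.
have t0_lt : t0 < t by rewrite lt_neqAle eq_sym t_neq.
have t_gt0 : 0 < t by exact: lt_trans t0_lt.
have [fx_diff fx_grad] := (f_C1 i).1 (x t).
have x_dert : is_derive t 1 x (xd t).
  apply: has_deriv_on_is_derive x_der _.
  have t_in : t \in `]t0, +oo[ by rewrite in_itv /= andbT.
  apply: filterS (near_in_itvoy t_in) => s; rewrite in_itv /= andbT => /ltW.
  by rewrite /= in_itv /= andbT.
have E_der := is_derive_energy ipP z lambda xi fx_diff x_dert (xd_dert t0_le).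
eexists; first exact: E_der.
have [[c Cc cE] _] := x_projt t0_lt.
have xddE : xdd t = - ((alpha / t) *: xd t) - c by rewrite -cE addrC addKr.
have descent : ip (gradf i (x t)) (xd t) - ip c (xd t) <= 0.
  have K_convex := convex_shift_set (xdd t) (convex_conv_hull (gradf^~ (x t))).
  have Kg : shift_set (Cset gradf (x t)) (xdd t) (gradf i (x t) + xdd t).
    by exists (gradf i (x t)); first exact: conv_hull_mem.
  have := is_proj_variational ipP K_convex (x_projt t0_lt) _ Kg.
  have -> : gradf i (x t) + xdd t - - ((alpha / t) *: xd t) = gradf i (x t) - c.
    by rewrite -cE opprD addrACA subrr addr0.
  rewrite subr0 (ipNl ipP) (ipZl ipP) oppr_ge0 pmulr_rle0 ?divr_gt0 //.
  by rewrite (ipC ipP) (ipBl ipP).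
have min_le := minI_le_ip_Cset ipP (x t) z c f_convex (fun j => (f_C1 j).1) Cc.
rewrite fx_grad xddE (ip_damped_rate ipP) ?gt_eqF //.
have : t ^+ 2 * (ip (gradf i (x t)) (xd t) - ip c (xd t)) <= 0.
  by rewrite mulr_ge0_le0 ?sqr_ge0.
have : t * lambda * minI (fun j => f j (x t) - f j z) <= t * lambda * ip c (x t - z).
  by apply: ler_wpM2l => //; rewrite mulr_ge0 // ltW.
rewrite /xi; lra.
Qed.
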